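(* Let $H\subseteq F^7$ be the binary Hamming code of length 7 spanned by the vectors with supports $\{1,2,3\},\{1,4,5\},\{1,6,7\},\{2,4,6\}$. Let $\lambda_1:H\to\{0,1\}$ take the value $0$ exactly on $0^7$, $\{1,6,7\}$, $\{1,3,5,7\}$, $1^7$ (codewords given by supports) and $1$ on the other codewords, and let $\lambda_2:H\to\{0,1\}$ take the value $0$ exactly on $0^7$, $\{1,6,7\}$, $\{2,4,6\}$, $\{4,5,6,7\}$ and $1$ on the other codewords. Then the perfect codes $V22^1=V_H^{\lambda_1}$ and $V3^11=V_H^{\lambda_2}$ of length 15 are homogeneous, where $V_H^\lambda=\{(x+y,\ |x|+\lambda(y),\ x)\mid x\in F^7,\ y\in H\}$.
   Context: $|x|=x_1+\dots+x_7\pmod 2$. For a binary perfect code $C$ of length $m$ and a codeword $y\in C$, $STS(C,y)=\{\mathrm{supp}(x+y)\mid x\in C,\ d(x,y)=3\}$ (a Steiner triple system on $\{1,\dots,m\}$), where $d$ is Hamming distance. A perfect code $C$ containing $0^m$ is homogeneous if for every $y\in C$ there is a permutation $\pi\in S_m$ with $\pi(STS(C,y))=STS(C,0^m)$. *)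

(* Binary words of length m are finite functions 'I_m -> bool
   (bool = GF(2), addition = xor). Coordinates 1..m of the paper are 'I_m
   with index i standing for coordinate i+1. *)
From mathcomp Require Import all_boot fingroup perm.
Set Implicit Arguments. Unset Strict Implicit. Unset Printing Implicit Defensive.

Definition word (m : nat) := {ffun 'I_m -> bool}.

Definition zero_word (m : nat) : word m := [ffun=> false].
Definition addw (m : nat) (x y : word m) : word m := [ffun i => x i (+) y i].

Definition supp (m : nat) (x : word m) : {set 'I_m} := [set i | x i].
Definition hdist (m : nat) (x y : word m) : nat := #|[set i | x i != y i]|.

Definition wpar (m : nat) (x : word m) : bool := odd #|supp x|.

Definition perfect_code (m : nat) (C : {set word m}) : Prop :=
  forall x : word m, exists! c, c \in C /\ hdist x c <= 1.

Definition STS (m : nat) (C : {set word m}) (y : word m) : {set {set 'I_m}} :=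
  [set supp (addw x y) | x in C & hdist x y == 3].

Definition perm_sets (m : nat) (p : {perm 'I_m}) (S : {set {set 'I_m}})
  : {set {set 'I_m}} := [set (fun B : {set 'I_m} => [set p i | i in B]) B | B in S].

Definition homogeneous (m : nat) (C : {set word m}) : Prop :=
  [/\ perfect_code C, zero_word m \in C &
      forall y, y \in C -> exists p : {perm 'I_m},
        perm_sets p (STS C y) = STS C (zero_word m)].

(* word of length 7 from a (1-indexed) support *)
Definition w7 (s : seq nat) : word 7 := [ffun i : 'I_7 => (i.+1 \in s)].

Definition Hcomb (a b c d : bool) : word 7 :=
  [ffun i => (a && w7 [:: 1; 2; 3] i) (+) (b && w7 [:: 1; 4; 5] i)
             (+) (c && w7 [:: 1; 6; 7] i) (+) (d && w7 [:: 2; 4; 6] i)].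
Definition H7 : {set word 7} :=
  [set y | [exists a : bool, exists b : bool, exists c : bool, exists d : bool,
            y == Hcomb a b c d]].

Definition lambda1 (y : word 7) : bool :=
  y \notin [:: w7 [::]; w7 [:: 1; 6; 7]; w7 [:: 1; 3; 5; 7];
              w7 [:: 1; 2; 3; 4; 5; 6; 7]].
Definition lambda2 (y : word 7) : bool :=
  y \notin [:: w7 [::]; w7 [:: 1; 6; 7]; w7 [:: 2; 4; 6]; w7 [:: 4; 5; 6; 7]].

Definition cat15 (u : word 7) (b : bool) (x : word 7) : word 15 :=
  [ffun i : 'I_15 =>
     match ltnP i 7, ltnP 7 i with
     | LtnNotGeq h, _ => u (Ordinal h)
     | _, LtnNotGeq h' => x (inord (i - 8))
     | _, _ => b
     end].

Definition Vasiliev (H : {set word 7}) (lam : word 7 -> bool) : {set word 15} :=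
  [set cat15 (addw x y) (wpar x (+) lam y) x | x in [set: word 7], y in H].

From mathcomp Require Import all_boot fingroup perm.
From mathcomp Require Import zify.
Set Implicit Arguments. Unset Strict Implicit. Unset Printing Implicit Defensive.

(* A Vasiliev code V = V_H^lambda is invariant under translation by every
   codeword (x, |x|, x), and translations preserve Hamming distance and
   Steiner triple systems.  Every word of length 15 is a translate of some
   (u, b, 0), and every codeword a translate of some (h, lambda(h), 0) with
   h in H.  So it suffices to check, by evaluation on boolean sequences, that
   each of the 256 words (u, b, 0) has exactly one codeword at distance at most
   1, and that for each of the 16 words (h, lambda(h), 0) an explicit
   permutation of the coordinates maps its triples onto those of 0: a triple B
   belongs to STS(V, r) iff r + 1_B is in V. *)

Section Words.
Variable m : nat.
Implicit Types (x y k r c : word m).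

Lemma addwA x y k : addw (addw x y) k = addw x (addw y k).
Proof. by apply/ffunP => i; rewrite !ffunE addbA. Qed.

Lemma addwC x y : addw x y = addw y x.
Proof. by apply/ffunP => i; rewrite !ffunE addbC. Qed.

Lemma add0w x : addw (zero_word m) x = x.
Proof. by apply/ffunP => i; rewrite !ffunE. Qed.

Lemma addwK x k : addw (addw x k) k = x.
Proof. by apply/ffunP => i; rewrite !ffunE -addbA addbb addbF. Qed.

Lemma addw_addr2 x y k : addw (addw x k) (addw y k) = addw x y.
Proof. by rewrite addwA [addw k _]addwC addwK. Qed.

Lemma hdist_addr x y k : hdist (addw x k) (addw y k) = hdist x y.
Proof.
by apply: eq_card => i; rewrite !inE !ffunE; case: (x i); case: (y i); case: (k i).
Qed.

Lemma wpar_add x y : wpar (addw x y) = wpar x (+) wpar y.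
Proof.
rewrite /wpar; have -> : supp (addw x y) = (supp x :|: supp y) :\: (supp x :&: supp y).
  by apply/setP => i; rewrite !inE ffunE; case: (x i); case: (y i).
have sIU : supp x :&: supp y \subset supp x :|: supp y.
  exact: subset_trans (subsetIl _ _) (subsetUl _ _).
by rewrite cardsDS // oddB ?subset_leq_card // -oddD cardsUI oddD.
Qed.

Definition flip r (i : 'I_m) : word m := [ffun j => r j (+) (j == i)].

Lemma hdist_flip r i : hdist r (flip r i) = 1.
Proof.
rewrite /hdist -(cards1 i); apply: eq_card => j.
by rewrite !inE ffunE; case: (r j); case: (j == i).
Qed.

Lemma hdist_le1_flip r c : hdist r c <= 1 -> c = r \/ exists i, c = flip r i.
Proof.
rewrite /hdist leq_eqVlt ltnS leqn0 cards_eq0 => /orP [/cards1P [i Ei] | /eqP E].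
  right; exists i; apply/ffunP => j; move/setP: Ei => /(_ j); rewrite !inE ffunE.
  by case: (j == i); case: (r j); case: (c j).
left; apply/ffunP => j; move/setP: E => /(_ j); rewrite !inE.
by case: (r j); case: (c j).
Qed.

Lemma hdistxx r : hdist r r = 0.
Proof.
rewrite /hdist; apply/eqP; rewrite cards_eq0 eqEsubset sub0set andbT.
by apply/subsetP => j; rewrite !inE eqxx.
Qed.

End Words.

Lemma cards3_set3 (T : finType) (B : {set T}) :
  #|B| = 3 -> exists a b c, B = [set a; b; c].
Proof.
move=> B3; have [a aB] : exists a, a \in B by apply/card_gt0P; rewrite B3.
have /cards2P [b [c [_ Ebc]]] : #|B :\ a| == 2.
  by move: B3; rewrite (cardsD1 a) aB add1n => -[->].
by exists a, b, c; rewrite -(setD1K aB) Ebc setUA.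
Qed.

Definition ind_word m (B : {set 'I_m}) : word m := [ffun i => i \in B].

Section Translations.
Variables (m : nat) (C : {set word m}).

Lemma STSE r :
  STS C r = [set B : {set 'I_m} | (#|B| == 3) && (addw (ind_word B) r \in C)].
Proof.
apply/setP => B; rewrite inE; apply/imsetP/andP => [[x] | [/eqP B3 BrC]].
  rewrite inE => /andP [xC /eqP d3] ->; have -> : addw (ind_word (supp (addw x r))) r = x.
    by apply/ffunP => i; rewrite !ffunE inE ffunE; case: (x i); case: (r i).
  split=> //; rewrite -d3; apply/eqP/eq_card => i.
  by rewrite !inE ffunE; case: (x i); case: (r i).
exists (addw (ind_word B) r); last first.
  by apply/setP => i; rewrite !inE !ffunE; case: (i \in B); case: (r i).
rewrite inE BrC -B3 /hdist; apply/eqP/eq_card => i.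
by rewrite !inE !ffunE; case: (i \in B); case: (r i).
Qed.

Variable k : word m.
Hypothesis C_addw : forall w, (addw w k \in C) = (w \in C).

Lemma STS_addw r : STS C (addw r k) = STS C r.
Proof. by rewrite !STSE; apply/setP => B; rewrite !inE -addwA C_addw. Qed.

Lemma unique_near_addw r :
  (exists! c, c \in C /\ hdist r c <= 1) ->
  exists! c, c \in C /\ hdist (addw r k) c <= 1.
Proof.
case=> c [[cC rc] c_uniq]; exists (addw c k); split.
  by rewrite C_addw hdist_addr.
move=> c' [c'C rc']; rewrite -(addwK c' k) (c_uniq (addw c' k)) //.
by rewrite C_addw -(hdist_addr _ _ k) addwK.
Qed.

End Translations.

Lemma perm_setsE m (p : {perm 'I_m}) S :
  perm_sets p S = [set B : {set 'I_m} | (p^-1)%g @: B \in S].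
Proof.
apply/setP => B; rewrite inE; apply/imsetP/idP => [[B' B'S ->] | BS].
  by rewrite -imset_comp (eq_imset _ (permK p)) imset_id.
by exists ((p^-1)%g @: B); rewrite // -imset_comp (eq_imset _ (permKV p)) imset_id.
Qed.

Lemma perm_sets_STS_zero m (C : {set word m}) r (p : {perm 'I_m}) :
  (forall B : {set 'I_m}, #|B| = 3 ->
     (addw (ind_word ((p^-1)%g @: B)) r \in C) = (ind_word B \in C)) ->
  perm_sets p (STS C r) = STS C (zero_word m).
Proof.
move=> Ep; rewrite perm_setsE !STSE; apply/setP => B; rewrite !inE.
rewrite card_imset; last exact: perm_inj.
have -> : addw (ind_word B) (zero_word m) = ind_word B by rewrite addwC add0w.
by case: (#|B| =P 3) => // /Ep.
Qed.

Definition catw (u : word 7) (b : bool) (x : word 7) : word 15 :=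
  [ffun i : 'I_15 => if i < 7 then u (inord i)
                     else if i == 7 :> nat then b else x (inord (i - 8))].

Lemma cat15E u b x : cat15 u b x = catw u b x.
Proof.
apply/ffunP => i; rewrite !ffunE; case: (ltnP i 7) => [i_lt7 | i_ge7].
  by congr (u _); apply: val_inj; rewrite /= inordK.
by case: (ltnP 7 i) => [i_gt7 | i_le7]; [rewrite ifN | rewrite ifT]; lia.
Qed.

Lemma catw_inj u b x u' b' x' :
  catw u b x = catw u' b' x' -> [/\ u = u', b = b' & x = x'].
Proof.
move=> E; have Ei (i : nat) := congr1 (fun w : word 15 => w (inord i)) E.
split.
- apply/ffunP => i; move: (Ei i); rewrite !ffunE inordK; last by have := ltn_ord i; lia.
  by rewrite ltn_ord inord_val.
- by move: (Ei 7); rewrite !ffunE inordK // ltnn eqxx.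
- apply/ffunP => i; move: (Ei (i + 8)); rewrite !ffunE inordK; last by have := ltn_ord i; lia.
  have [-> ->] : (i + 8 < 7) = false /\ (i + 8 == 7) = false by lia.
  by rewrite addnK inord_val.
Qed.

Lemma catwP w : exists u b x, w = catw u b x.
Proof.
exists [ffun i : 'I_7 => w (inord i)], (w (inord 7)), [ffun i : 'I_7 => w (inord (i + 8))].
apply/ffunP => i; rewrite !ffunE; case: ifP => [i_lt7 | i_ge7]; last case: ifP => [/eqP i7 | i_ne7].
- by rewrite inordK // inord_val.
- by congr (w _); apply: val_inj; rewrite /= inordK.
- rewrite inordK; last by have := ltn_ord i; lia.
  have -> : i - 8 + 8 = i by move/negbT: i_ge7; move/negbT: i_ne7; lia.
  by rewrite inord_val.
Qed.

Lemma addw_catw u b x u' b' x' :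
  addw (catw u b x) (catw u' b' x') = catw (addw u u') (b (+) b') (addw x x').
Proof. by apply/ffunP => i; rewrite !ffunE; do 2?case: ifP; rewrite ?ffunE. Qed.

Lemma mem_Vasiliev_catw H lam u b x :
  (catw u b x \in Vasiliev H lam) = (addw u x \in H) && (b == wpar x (+) lam (addw u x)).
Proof.
apply/imset2P/andP => [[x' y _ yH] | [uxH /eqP ->]].
  by rewrite cat15E => /catw_inj [-> -> ->]; rewrite [addw x' y]addwC addwK.
apply: (@Imset2spec _ _ _ _ _ _ _ x (addw u x)) => //.
by rewrite cat15E [addw x _]addwC addwK.
Qed.

Definition diagw (x : word 7) : word 15 := catw x (wpar x) x.

Lemma Vasiliev_addw_diagw H lam x w :
  (addw w (diagw x) \in Vasiliev H lam) = (w \in Vasiliev H lam).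
Proof.
have [u [b [x' ->]]] := catwP w.
rewrite addw_catw !mem_Vasiliev_catw addw_addr2 wpar_add.
by case: (wpar x); case: (wpar x'); case: b; case: (lam _).
Qed.

Lemma catw_diagw u b x :
  catw u b x = addw (catw (addw u x) (b (+) wpar x) (zero_word 7)) (diagw x).
Proof. by rewrite addw_catw add0w addwK -addbA addbb addbF. Qed.

Definition word_of_seq m (l : seq bool) : word m := [ffun i : 'I_m => nth false l i].

Section WordsOfSeqs.
Variable m : nat.
Implicit Types l : seq bool.

Lemma word_of_seqP (w : word m) : exists2 l, size l = m & w = word_of_seq m l.
Proof.
exists [seq w i | i <- enum 'I_m]; first by rewrite size_map size_enum_ord.
by apply/ffunP => i; rewrite ffunE (nth_map i) ?size_enum_ord // nth_ord_enum.
Qed.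

Lemma eq_word_of_seq l l' : size l = m -> size l' = m ->
  (word_of_seq m l == word_of_seq m l') = (l == l').
Proof.
move=> sl sl'; apply/eqP/eqP => [E | -> //].
apply: (@eq_from_nth _ false) => [|i]; first by rewrite sl sl'.
rewrite sl => i_lt; have := congr1 (fun w : word m => w (Ordinal i_lt)) E.
by rewrite !ffunE.
Qed.

Lemma zero_word_of_seq : zero_word m = word_of_seq m (nseq m false).
Proof. by apply/ffunP => i; rewrite !ffunE nth_nseq ltn_ord. Qed.

Definition xorseq l l' := [seq p.1 (+) p.2 | p <- zip l l'].

Lemma addw_word_of_seq l l' : size l = m -> size l' = m ->
  addw (word_of_seq m l) (word_of_seq m l') = word_of_seq m (xorseq l l').
Proof.
move=> sl sl'; apply/ffunP => i; rewrite !ffunE (nth_map (false, false)).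
  by rewrite nth_zip // sl sl'.
by rewrite size_zip sl sl' minnn.
Qed.

Lemma wpar_word_of_seq l : size l = m -> wpar (word_of_seq m l) = odd (count id l).
Proof.
move=> sl; rewrite /wpar cardE /enum_mem -enumT size_filter.
rewrite -[in RHS](mkseq_nth false l) sl /mkseq count_map -val_enum_ord count_map.
by congr odd; apply: eq_count => i; rewrite /= inE ffunE.
Qed.

Definition flip_seq l k := [seq nth false l t (+) (t == k) | t <- iota 0 (size l)].

Lemma flip_word_of_seq l (i : 'I_m) : size l = m ->
  word_of_seq m (flip_seq l i) = flip (word_of_seq m l) i.
Proof.
by move=> sl; apply/ffunP => j; rewrite !ffunE (nth_map 0) ?size_iota ?sl // nth_iota ?sl.
Qed.

Lemma flip_seq_size l : flip_seq l (size l) = l.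
Proof.
rewrite /flip_seq -[RHS](mkseq_nth false l); apply/eq_in_map => t.
by rewrite mem_iota add0n => /andP [_ /ltn_eqF ->]; rewrite addbF.
Qed.

(* The index [m] stands for [l] itself, since [flip_seq] flips nothing out of range. *)
Lemma unique_near_word_of_seq (C : {set word m}) l : size l = m ->
  size [seq k <- iota 0 m.+1 | word_of_seq m (flip_seq l k) \in C] == 1 ->
  exists! c, c \in C /\ hdist (word_of_seq m l) c <= 1.
Proof.
move=> sl; set ks := filter _ _; case Eks: ks => [|k0 []] // _.
have mem_ks k : (k \in ks) = (k < m.+1) && (word_of_seq m (flip_seq l k) \in C).
  by rewrite mem_filter mem_iota andbC.
have k0_ks : k0 \in ks by rewrite Eks inE.
have flipE c : hdist (word_of_seq m l) c <= 1 ->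
    exists2 k, k < m.+1 & c = word_of_seq m (flip_seq l k).
  case/hdist_le1_flip => [-> | [i ->]]; first by exists m; rewrite // -sl flip_seq_size.
  by exists i; rewrite ?flip_word_of_seq // ltnS ltnW.
exists (word_of_seq m (flip_seq l k0)); split.
  move: k0_ks; rewrite mem_ks => /andP [k0_le k0C]; split=> //.
  case: (ltnP k0 m) => [k0_lt | k0_ge].
    by rewrite (_ : k0 = Ordinal k0_lt) // flip_word_of_seq // hdist_flip.
  by rewrite (_ : k0 = size l) ?flip_seq_size ?hdistxx //; lia.
move=> c [cC /flipE [k k_le Ec]]; have : k \in ks by rewrite mem_ks k_le -Ec.
by rewrite Eks inE Ec => /eqP ->.
Qed.

End WordsOfSeqs.

Lemma catw_word_of_seq u b x : size u = 7 -> size x = 7 ->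
  catw (word_of_seq 7 u) b (word_of_seq 7 x) = word_of_seq 15 (u ++ b :: x).
Proof.
move=> su sx; apply/ffunP => i; rewrite !ffunE nth_cat su.
case: ifP => [i_lt7 | i_ge7]; first by rewrite inordK.
case: ifP => [/eqP -> // | i_ne7].
have -> : i - 7 = (i - 8).+1 by move/negbT: i_ge7; move/negbT: i_ne7; lia.
by rewrite /= inordK //; have := ltn_ord i; lia.
Qed.

Lemma word_of_seq15 L : size L = 15 ->
  word_of_seq 15 L =
  catw (word_of_seq 7 (take 7 L)) (nth false L 7) (word_of_seq 7 (drop 8 L)).
Proof.
move=> sL; rewrite catw_word_of_seq ?size_take ?size_drop ?sL //.
by rewrite -drop_nth ?sL // cat_take_drop.
Qed.

Definition w7_seq (s : seq nat) : seq bool := [seq i.+1 \in s | i <- iota 0 7].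

Lemma w7E s : w7 s = word_of_seq 7 (w7_seq s).
Proof. by apply/ffunP => i; rewrite !ffunE (nth_map 0) ?size_iota // nth_iota. Qed.

Definition Hcomb_seq (a b c d : bool) : seq bool :=
  [seq (a && (i.+1 \in [:: 1; 2; 3])) (+) (b && (i.+1 \in [:: 1; 4; 5]))
       (+) (c && (i.+1 \in [:: 1; 6; 7])) (+) (d && (i.+1 \in [:: 2; 4; 6]))
  | i <- iota 0 7].

Lemma HcombE a b c d : Hcomb a b c d = word_of_seq 7 (Hcomb_seq a b c d).
Proof. by apply/ffunP => i; rewrite !ffunE (nth_map 0) ?size_iota // nth_iota. Qed.

(* The n-th entry has coordinates given by the binary digits of n. *)
Definition H7_seqs : seq (seq bool) :=
  [seq Hcomb_seq (odd n) (odd (n %/ 2)) (odd (n %/ 4)) (odd (n %/ 8)) | n <- iota 0 16].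

Lemma size_H7_seq l : l \in H7_seqs -> size l = 7.
Proof. by case/mapP => n _ ->; rewrite size_map size_iota. Qed.

Lemma Hcomb_seq_in a b c d : Hcomb_seq a b c d \in H7_seqs.
Proof. by case: a; case: b; case: c; case: d; vm_compute. Qed.

Lemma mem_H7_seq l : size l = 7 -> (word_of_seq 7 l \in H7) = (l \in H7_seqs).
Proof.
move=> sl; rewrite inE; apply/existsP/idP => [[a /existsP [b /existsP [c /existsP [d]]]] | ].
  by rewrite HcombE eq_word_of_seq ?size_map ?size_iota // => /eqP ->; apply: Hcomb_seq_in.
case/mapP => n _ ->; exists (odd n); apply/existsP; exists (odd (n %/ 2)).
by apply/existsP; exists (odd (n %/ 4)); apply/existsP; exists (odd (n %/ 8)); rewrite HcombE.
Qed.

Lemma H7_seqP h : h \in H7 -> exists2 l, l \in H7_seqs & h = word_of_seq 7 l.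
Proof. by have [l sl ->] := word_of_seqP h; rewrite mem_H7_seq //; exists l. Qed.

Definition lam_notin (ss : seq (seq nat)) (y : word 7) : bool := y \notin map w7 ss.
Definition lam_notin_seq (ss : seq (seq nat)) (l : seq bool) : bool := l \notin map w7_seq ss.

Lemma lam_notin_word_of_seq ss l : size l = 7 ->
  lam_notin ss (word_of_seq 7 l) = lam_notin_seq ss l.
Proof.
move=> sl; rewrite /lam_notin /lam_notin_seq; elim: ss => //= s ss IH.
by rewrite !in_cons !negb_or IH w7E eq_word_of_seq ?size_map ?size_iota.
Qed.

Definition vasiliev_seq ss (L : seq bool) : bool :=
  let h := xorseq (take 7 L) (drop 8 L) in
  (h \in H7_seqs) && (nth false L 7 == odd (count id (drop 8 L)) (+) lam_notin_seq ss h).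

Lemma mem_Vasiliev_seq ss L : size L = 15 ->
  (word_of_seq 15 L \in Vasiliev H7 (lam_notin ss)) = vasiliev_seq ss L.
Proof.
move=> sL; have st : size (take 7 L) = 7 by rewrite size_take sL.
have sd : size (drop 8 L) = 7 by rewrite size_drop sL.
have sx : size (xorseq (take 7 L) (drop 8 L)) = 7 by rewrite size_map size_zip st sd.
rewrite word_of_seq15 // mem_Vasiliev_catw addw_word_of_seq //.
by rewrite mem_H7_seq // wpar_word_of_seq // lam_notin_word_of_seq.
Qed.

Fixpoint bool_seqs n : seq (seq bool) :=
  if n is n'.+1 then [seq b :: l | b <- [:: true; false], l <- bool_seqs n'] else [:: [::]].

Lemma mem_bool_seqs n l : size l = n -> l \in bool_seqs n.
Proof.
elim: n l => [|n IH] [|b l] //= [sl].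
by case: b; rewrite /= !mem_cat map_f ?orbT ?IH.
Qed.

Lemma perm_of_seqP n (s : seq nat) : perm_eq s (iota 0 n) ->
  exists p : {perm 'I_n}, forall i, p i = nth 0 s i :> nat.
Proof.
move=> sP; have ss : size s = n by rewrite (perm_size sP) size_iota.
have s_lt (i : 'I_n) : nth 0 s i < n.
  by have := mem_nth 0 (_ : i < size s); rewrite ss (perm_mem sP) mem_iota => /(_ (ltn_ord i)).
pose f i := Ordinal (s_lt i).
have f_inj : injective f.
  move=> i j /(congr1 val) /= /eqP; rewrite nth_uniq ?ss ?(perm_uniq sP) ?iota_uniq //.
  by move/eqP/val_inj.
by exists (perm f_inj) => i; rewrite permE.
Qed.

Definition preim_ind n (s : seq nat) (a b c : nat) : seq bool :=
  [seq nth 0 s t \in [:: a; b; c] | t <- iota 0 n].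

Lemma ind_word_preim n (p : {perm 'I_n}) s (a b c : 'I_n) :
  (forall i, p i = nth 0 s i :> nat) ->
  ind_word ((p^-1)%g @: [set a; b; c]) = word_of_seq n (preim_ind n s a b c).
Proof.
move=> pE; apply/ffunP => i; rewrite !ffunE (nth_map 0) ?size_iota // nth_iota //.
rewrite -{1}(permK p i) mem_imset; last exact: perm_inj.
by rewrite !inE -!(inj_eq val_inj) /= pE add0n orbA.
Qed.

Lemma ind_word_iota n (a b c : 'I_n) :
  ind_word [set a; b; c] = word_of_seq n (preim_ind n (iota 0 n) a b c).
Proof.
apply/ffunP => i; rewrite !ffunE (nth_map 0) ?size_iota // !nth_iota ?add0n //.
by rewrite !inE -!(inj_eq val_inj) /= orbA.
Qed.

Definition perfect_check ss : bool :=
  all (fun l =>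
         size [seq k <- iota 0 16 | vasiliev_seq ss (flip_seq (l ++ nseq 7 false) k)] == 1)
      (bool_seqs 8).

Definition sts_check ss (s : seq nat) (r : seq bool) : bool :=
  perm_eq s (iota 0 15) &&
  all (fun a => all (fun b => all (fun c =>
         vasiliev_seq ss (xorseq (preim_ind 15 s a b c) r)
         == vasiliev_seq ss (preim_ind 15 (iota 0 15) a b c))
      (iota 0 15)) (iota 0 15)) (iota 0 15).

Definition homogeneity_check ss (tab : seq (seq nat)) : bool :=
  all (fun h => sts_check ss (nth [::] tab (index h H7_seqs))
                             (h ++ lam_notin_seq ss h :: nseq 7 false))
      H7_seqs.

Section CheckedVasilievCodes.
Variables (ss : seq (seq nat)) (tab : seq (seq nat)).
Local Notation C := (Vasiliev H7 (lam_notin ss)).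

Lemma Vasiliev_perfect : perfect_check ss -> perfect_code C.
Proof.
move=> /allP perf w; have [u [b [x ->]]] := catwP w.
rewrite catw_diagw; apply: (unique_near_addw (Vasiliev_addw_diagw _ _ x)).
have [l sl ->] := word_of_seqP (addw u x).
rewrite zero_word_of_seq catw_word_of_seq ?size_nseq // -cat_rcons.
set L := _ ++ _; have sL : size L = 15 by rewrite size_cat size_rcons sl.
apply: unique_near_word_of_seq => //.
have -> : [seq k <- iota 0 16 | word_of_seq 15 (flip_seq L k) \in C]
        = [seq k <- iota 0 16 | vasiliev_seq ss (flip_seq L k)].
  by apply: eq_filter => k; rewrite mem_Vasiliev_seq // size_map size_iota.
by apply: perf; apply: mem_bool_seqs; rewrite size_rcons sl.
Qed.

Lemma Vasiliev_STS y : homogeneity_check ss tab -> y \in C ->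
  exists p : {perm 'I_15}, perm_sets p (STS C y) = STS C (zero_word 15).
Proof.
move=> /allP hom; have [u [b [x ->]]] := catwP y.
rewrite mem_Vasiliev_catw catw_diagw (STS_addw (Vasiliev_addw_diagw _ _ x)).
case/andP=> /H7_seqP [h hH ->] /eqP ->; have sh := size_H7_seq hH.
rewrite addbAC addbb addFb lam_notin_word_of_seq // zero_word_of_seq.
rewrite catw_word_of_seq ?size_nseq //.
have /andP [sP /allP triples] := hom h hH.
have [p pE] := perm_of_seqP sP.
exists p; apply: perm_sets_STS_zero => B /cards3_set3 [a [b' [c ->]]].
have sizes := (size_map, size_iota, size_cat, sh, size_nseq).
rewrite (ind_word_preim _ _ _ pE) ind_word_iota addw_word_of_seq ?sizes //.
rewrite !mem_Vasiliev_seq ?size_map ?size_zip ?sizes //.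
have in_iota (i : 'I_15) : (i : nat) \in iota 0 15 by rewrite mem_iota ltn_ord.
by move: (triples a (in_iota a)) => /allP /(_ b' (in_iota b')) /allP /(_ c (in_iota c)) /eqP.
Qed.

Theorem Vasiliev_homogeneous :
  vasiliev_seq ss (nseq 15 false) -> perfect_check ss -> homogeneity_check ss tab ->
  homogeneous C.
Proof.
move=> zC perf hom; split; [exact: Vasiliev_perfect | | by move=> y; exact: Vasiliev_STS].
by rewrite zero_word_of_seq mem_Vasiliev_seq ?size_nseq.
Qed.

End CheckedVasilievCodes.

Definition lambda1_zeros : seq (seq nat) :=
  [:: [::]; [:: 1; 6; 7]; [:: 1; 3; 5; 7]; [:: 1; 2; 3; 4; 5; 6; 7]].
Definition lambda2_zeros : seq (seq nat) :=
  [:: [::]; [:: 1; 6; 7]; [:: 2; 4; 6]; [:: 4; 5; 6; 7]].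

(* Row n lists the images of the coordinates 0..14 under a permutation mapping
   STS(V, (h, lambda(h), 0)) onto STS(V, 0), for h the n-th element of [H7_seqs]. *)
Definition perms1 : seq (seq nat) :=
  [:: [:: 0; 1; 2; 3; 4; 5; 6; 7; 8; 9; 10; 11; 12; 13; 14];
    [:: 1; 0; 2; 5; 11; 6; 12; 7; 9; 8; 10; 13; 3; 14; 4];
    [:: 1; 0; 10; 5; 3; 6; 12; 7; 9; 8; 2; 13; 11; 14; 4];
    [:: 0; 1; 10; 3; 12; 13; 6; 7; 8; 9; 2; 11; 4; 5; 14];
    [:: 1; 0; 2; 5; 3; 14; 4; 7; 9; 8; 10; 13; 11; 6; 12];
    [:: 0; 1; 2; 3; 4; 13; 14; 7; 8; 9; 10; 11; 12; 5; 6];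
    [:: 0; 1; 2; 3; 4; 13; 14; 7; 8; 9; 10; 11; 12; 5; 6];
    [:: 1; 0; 2; 5; 3; 6; 4; 7; 9; 8; 10; 13; 11; 14; 12];
    [:: 1; 0; 10; 5; 11; 14; 4; 7; 9; 8; 2; 13; 3; 6; 12];
    [:: 0; 1; 10; 3; 12; 13; 14; 7; 8; 9; 2; 11; 4; 5; 6];
    [:: 0; 1; 10; 3; 12; 13; 14; 7; 8; 9; 2; 11; 4; 5; 6];
    [:: 1; 0; 10; 5; 11; 6; 4; 7; 9; 8; 2; 13; 3; 14; 12];
    [:: 0; 1; 10; 3; 12; 5; 6; 7; 8; 9; 2; 11; 4; 13; 14];
    [:: 1; 0; 10; 5; 3; 6; 12; 7; 9; 8; 2; 13; 11; 14; 4];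
    [:: 1; 0; 2; 5; 11; 6; 12; 7; 9; 8; 10; 13; 3; 14; 4];
    [:: 0; 1; 2; 3; 4; 13; 6; 7; 8; 9; 10; 11; 12; 5; 14]].

Definition perms2 : seq (seq nat) :=
  [:: [:: 0; 1; 2; 3; 4; 5; 6; 7; 8; 9; 10; 11; 12; 13; 14];
    [:: 2; 4; 5; 0; 9; 11; 6; 7; 10; 12; 13; 8; 1; 3; 14];
    [:: 2; 4; 13; 0; 1; 11; 14; 7; 10; 12; 5; 8; 9; 3; 6];
    [:: 0; 1; 10; 3; 12; 5; 6; 7; 8; 9; 2; 11; 4; 13; 14];
    [:: 2; 4; 5; 0; 9; 3; 14; 7; 10; 12; 13; 8; 1; 11; 6];
    [:: 0; 1; 2; 3; 12; 5; 6; 7; 8; 9; 10; 11; 4; 13; 14];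
    [:: 0; 1; 2; 3; 12; 13; 6; 7; 8; 9; 10; 11; 4; 5; 14];
    [:: 2; 4; 5; 0; 9; 11; 6; 7; 10; 12; 13; 8; 1; 3; 14];
    [:: 2; 4; 5; 0; 1; 11; 14; 7; 10; 12; 13; 8; 9; 3; 6];
    [:: 0; 1; 2; 3; 12; 5; 6; 7; 8; 9; 10; 11; 4; 13; 14];
    [:: 0; 1; 10; 3; 4; 5; 6; 7; 8; 9; 2; 11; 12; 13; 14];
    [:: 2; 4; 13; 0; 9; 11; 6; 7; 10; 12; 5; 8; 1; 3; 14];
    [:: 0; 1; 10; 3; 12; 13; 6; 7; 8; 9; 2; 11; 4; 5; 14];
    [:: 2; 4; 13; 0; 9; 11; 6; 7; 10; 12; 5; 8; 1; 3; 14];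
    [:: 2; 4; 13; 0; 9; 3; 14; 7; 10; 12; 5; 8; 1; 11; 6];
    [:: 0; 1; 10; 3; 12; 5; 6; 7; 8; 9; 2; 11; 4; 13; 14]].

Theorem lemma3 :
  homogeneous (Vasiliev H7 lambda1) /\ homogeneous (Vasiliev H7 lambda2).
Proof.
split.
- by apply: (Vasiliev_homogeneous (ss := lambda1_zeros) (tab := perms1)); vm_compute.
- by apply: (Vasiliev_homogeneous (ss := lambda2_zeros) (tab := perms2)); vm_compute.
Qed.
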